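(* For all positive integers $n,k$, $$WS(n+k) \geq S(k)\left(WS(n) + \left\lceil \frac{WS(n)}{2}\right\rceil + 1\right) + WS(n).$$
   Context: A set $A \subseteq \mathbb{N}$ is sum-free if for all $(a,b)\in A^2$ (allowing $a=b$), $a+b \notin A$. A set $B\subseteq\mathbb{N}$ is weakly sum-free if for all $(a,b)\in B^2$ with $a\neq b$, $a+b\notin B$. $S(n)$ (the Schur number) is the largest $p$ such that $\{1,\dots,p\}$ can be partitioned into $n$ sum-free subsets; $WS(n)$ (the weak Schur number) is the largest $p$ such that $\{1,\dots,p\}$ can be partitioned into $n$ weakly sum-free subsets. *)

From mathcomp Require Import all_boot.
Set Implicit Arguments. Unset Strict Implicit. Unset Printing Implicit Defensive.

Definition sum_free (A : nat -> Prop) : Prop :=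
  forall a b, A a -> A b -> ~ A (a + b).
Definition weakly_sum_free (A : nat -> Prop) : Prop :=
  forall a b, A a -> A b -> a <> b -> ~ A (a + b).

(* {1,...,p} can be partitioned into n subsets each satisfying P:
   a colouring c assigns to every x in {1..p} a part index c x < n;
   the parts are the colour classes (some may be empty). *)
Definition partitionable (P : (nat -> Prop) -> Prop) (n p : nat) : Prop :=
  exists c : nat -> nat,
    (forall x, 1 <= x <= p -> c x < n) /\
    (forall i, i < n -> P (fun x => 1 <= x <= p /\ c x = i)).

Definition is_largest (P : (nat -> Prop) -> Prop) (n s : nat) : Prop :=
  partitionable P n s /\ forall p, partitionable P n p -> p <= s.

Definition is_Schur_number (n s : nat) : Prop := is_largest sum_free n s.
Definition is_weak_Schur_number (n w : nat) : Prop :=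
  is_largest weakly_sum_free n w.

Definition ceil_half (m : nat) : nat := (m + 1) %/ 2.

From mathcomp Require Import all_boot.
From mathcomp Require Import zify.

Set Implicit Arguments.
Unset Strict Implicit.
Unset Printing Implicit Defensive.

(* Let m = WS(n), c = ceil(m/2) and L = m + c + 1, and write x + c = q L + r
   with r < L.  The numbers x with q > 0 and r <= m form S(k) blocks of m + 1
   consecutive integers; block q gets colour n + (colour of q in a sum-free
   k-colouring of [1, S(k)]).  Every other x in [1, S(k) L + m] is q L + w
   with 1 <= w <= m, and gets the colour of w in a weakly sum-free
   n-colouring of [1, m].  Since 2c >= m, the sum of two block elements
   lands in the block whose index is the sum of their indices, so block
   colours are sum-free.  Since 2c <= m + 1, outside the blocks residues add
   without carry, and two distinct elements with equal residue w have w > m - c,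
   so 2w > m is no residue at all. *)

Lemma ceil_half_bounds m : m <= 2 * ceil_half m <= m + 1.
Proof. by rewrite /ceil_half; lia. Qed.

Lemma eq_quotient_of_close L q q' a b :
  q * L + a = q' * L + b -> a < L + b -> b < L + a -> q = q'.
Proof.
move=> E ltab ltba; case: (ltngtP q q') => // [lt_qq'|lt_q'q].
- have : q.+1 * L <= q' * L by rewrite leq_mul2r lt_qq' orbT.
  by rewrite mulSn; lia.
- have : q'.+1 * L <= q * L by rewrite leq_mul2r lt_q'q orbT.
  by rewrite mulSn; lia.
Qed.

Section WeakSchurExtension.

Variables (n k m s : nat) (cA cS : nat -> nat).
Hypothesis cA_lt : forall x, 1 <= x <= m -> cA x < n.
Hypothesis cA_weakly_sum_free :
  forall i, i < n -> weakly_sum_free (fun x => 1 <= x <= m /\ cA x = i).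
Hypothesis cS_lt : forall x, 1 <= x <= s -> cS x < k.
Hypothesis cS_sum_free :
  forall i, i < k -> sum_free (fun x => 1 <= x <= s /\ cS x = i).

Local Notation c := (ceil_half m).
Local Notation L := (m + c + 1).
Local Notation N := (s * L + m).

Definition block_index x := (x + c) %/ L.
Definition block_offset x := (x + c) %% L.
Definition in_block x := (0 < block_index x) && (block_offset x <= m).
Definition residue x := block_offset x - c.

Definition extension_colouring x :=
  if in_block x then n + cS (block_index x) else cA (residue x).

Lemma block_decomp x : x + c = block_index x * L + block_offset x.
Proof. exact: divn_eq. Qed.

Lemma block_offset_lt x : block_offset x < L.
Proof. by rewrite ltn_pmod // addn1. Qed.

Lemma block_index_le x : x <= N -> block_index x <= s.
Proof.
move=> le_xN; rewrite leqNgt; apply/negP => lt_s_idx.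
have : s.+1 * L <= block_index x * L by rewrite leq_mul2r lt_s_idx orbT.
by have := block_decomp x; rewrite mulSn; lia.
Qed.

Lemma residue_spec x : 0 < x -> ~~ in_block x ->
  [/\ x = block_index x * L + residue x, 0 < residue x <= m
    & 0 < block_index x -> m < residue x + c].
Proof.
rewrite /in_block /residue negb_and -leqNgt -ltnNge => x_gt0 out_x.
have := block_decomp x; have := block_offset_lt x; have := ceil_half_bounds m.
case: (posnP (block_index x)) out_x => [->|idx_gt0] /= out_x.
  by rewrite !mul0n; split; lia.
rewrite leqNgt idx_gt0 /= in out_x.
by split; lia.
Qed.

Lemma block_index_add a b : in_block a -> in_block b -> in_block (a + b) ->
  block_index (a + b) = block_index a + block_index b.
Proof.
move=> /andP[_ ra] /andP[_ rb] /andP[_ rab]; have := ceil_half_bounds m.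
have Ea := block_decomp a; have Eb := block_decomp b.
have Eab := block_decomp (a + b).
have E : (block_index a + block_index b) * L + (block_offset a + block_offset b)
       = block_index (a + b) * L + (block_offset (a + b) + c).
  by rewrite mulnDl; lia.
by move=> hc; symmetry; apply: (eq_quotient_of_close E); lia.
Qed.

Lemma residue_add a b : 0 < a -> 0 < b -> a != b ->
  ~~ in_block a -> ~~ in_block b -> ~~ in_block (a + b) ->
  residue a != residue b /\ residue (a + b) = residue a + residue b.
Proof.
move=> a_gt0 b_gt0 /eqP neq_ab /(residue_spec a_gt0)[Ea wa wa_far].
move=> /(residue_spec b_gt0)[Eb wb wb_far].
have ab_gt0 : 0 < a + b by rewrite addn_gt0 a_gt0.
move=> /(residue_spec ab_gt0)[Eab wab wab_far].
have hc := ceil_half_bounds m.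
case: (ltnP (residue a + residue b) (L + residue (a + b))) => [close|far].
  have E : (block_index a + block_index b) * L + (residue a + residue b)
         = block_index (a + b) * L + residue (a + b).
    by rewrite mulnDl; lia.
  have eq_idx : block_index a + block_index b = block_index (a + b).
    by apply: (eq_quotient_of_close E close); lia.
  have eq_res : residue (a + b) = residue a + residue b.
    by move/eqP: E; rewrite eq_idx eqn_add2l => /eqP.
  split=> //; apply/eqP => eq_w.
  have /eqP neq_idx : block_index a != block_index b.
    by apply/eqP => eq_i; apply: neq_ab; rewrite Ea Eb eq_i eq_w.
  lia.
case: (posnP (block_index (a + b))) Eab => [-> | /wab_far]; last by lia.
by rewrite mul0n add0n; lia.
Qed.

Lemma extension_colouring_lt x : 1 <= x <= N -> extension_colouring x < n + k.
Proof.
move=> /andP[x_gt0 le_xN]; rewrite /extension_colouring.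
case: ifP => [in_x | /negbT out_x].
  have /cS_lt : 1 <= block_index x <= s.
    by case/andP: in_x => -> _; rewrite block_index_le.
  by rewrite ltn_add2l.
have [_ /cA_lt lt_n _] := residue_spec x_gt0 out_x.
exact: ltn_addr.
Qed.

Lemma in_blockE x : 0 < x -> in_block x = (n <= extension_colouring x).
Proof.
move=> x_gt0; rewrite /extension_colouring.
case: ifP => [_ | /negbT out_x]; first by rewrite leq_addr.
by have [_ /cA_lt lt_n _] := residue_spec x_gt0 out_x; rewrite leqNgt lt_n.
Qed.

Lemma extension_colouring_weakly_sum_free i : i < n + k ->
  weakly_sum_free (fun x => 1 <= x <= N /\ extension_colouring x = i).
Proof.
move=> lt_i a b [range_a col_a] [range_b col_b] /eqP neq_ab [range_ab col_ab].
have [a_gt0 b_gt0] : 0 < a /\ 0 < b by case/andP: range_a; case/andP: range_b.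
case: (leqP n i) => [le_ni | lt_in].
  have class_S x : 1 <= x <= N -> extension_colouring x = i ->
      in_block x /\ (1 <= block_index x <= s /\ cS (block_index x) = i - n).
    move=> /andP[x_gt0 le_xN] col_x.
    have in_x : in_block x by rewrite in_blockE // col_x.
    move: col_x; rewrite /extension_colouring in_x => col_x.
    by case/andP: (in_x) => -> _; rewrite block_index_le //; split; lia.
  have [in_a Sa] := class_S a range_a col_a.
  have [in_b Sb] := class_S b range_b col_b.
  have [in_ab] := class_S (a + b) range_ab col_ab.
  rewrite block_index_add //.
  by apply: (cS_sum_free _ Sa Sb); lia.
have class_A x : 1 <= x <= N -> extension_colouring x = i ->
    ~~ in_block x /\ (1 <= residue x <= m /\ cA (residue x) = i).
  move=> /andP[x_gt0 _] col_x.
  have out_x : ~~ in_block x by rewrite in_blockE // col_x -ltnNge.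
  move: col_x; rewrite /extension_colouring (negbTE out_x) => col_x.
  by have [_ res_x _] := residue_spec x_gt0 out_x.
have [out_a Aa] := class_A a range_a col_a.
have [out_b Ab] := class_A b range_b col_b.
have [out_ab] := class_A (a + b) range_ab col_ab.
have [/eqP neq_res ->] := residue_add a_gt0 b_gt0 neq_ab out_a out_b out_ab.
exact: cA_weakly_sum_free lt_in _ _ Aa Ab neq_res.
Qed.

End WeakSchurExtension.

Lemma partitionable_weak_extension n k m s :
  partitionable weakly_sum_free n m -> partitionable sum_free k s ->
  partitionable weakly_sum_free (n + k) (s * (m + ceil_half m + 1) + m).
Proof.
move=> [cA [cA_lt cA_wsf]] [cS [cS_lt cS_sf]].
exists (extension_colouring n m cA cS); split.
- exact: extension_colouring_lt.
- exact: extension_colouring_weakly_sum_free.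
Qed.

Theorem corollary3p2 (n k Sk WSn WSnk : nat) :
  0 < n -> 0 < k ->
  is_Schur_number k Sk ->
  is_weak_Schur_number n WSn ->
  is_weak_Schur_number (n + k) WSnk ->
  Sk * (WSn + ceil_half WSn + 1) + WSn <= WSnk.
Proof.
move=> _ _ [partS _] [partWS _] [_ maxWS].
exact/maxWS/partitionable_weak_extension.
Qed.
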